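(* Let $Q$ and $W$ satisfy the standing assumptions with $W=Y$, and let $l\ge1$. If $Q$ is domino consistent, then $\hat Q^{l\triangledown}$ realizes the strongest asynchronous $l$-complete approximation, i.e. $\mathcal B(\hat Q^{l\triangledown})=\hat{\mathcal B}^l$.
   Context: Strings and signals: $\diamond$ is a symbol not in any other set considered. For a set $A$ and $l\in\mathbb N_0$, $A^l$ is the set of strings of length $l$ over $A$, indexed $\zeta=\zeta(0)\cdots\zeta(l-1)$. For a map $w$ on $\mathbb Z$ (or a string) and integers $t_1\le t_2$, $w|_{[t_1,t_2]}=w(t_1)\cdots w(t_2)$ is the string of length $t_2-t_1+1$ (absolute time forgotten). For a set $\mathcal S$ of such maps, $\mathcal S|_{[t_1,t_2]}=\{s|_{[t_1,t_2]}:s\in\mathcal S\}$. State machines: a state machine is $Q=(X,U,Y,\delta,X_0)$ with $X_0\subseteq X$, $\delta\subseteq X\times U\times Y\times X$. Let $H_\delta(x)=\{y:\exists u,x'.\,(x,u,y,x')\in\delta\}$, $F_\delta(x,u)=\{x':\exists y\in H_\delta(x).\,(x,u,y,x')\in\delta\}$. The full behavior $\mathcal B_f(Q)$ is the set of $(\mu,\nu,\xi)\in(U\times Y\times X)^{\mathbb N_0}$ with $\xi(0)\in X_0$ and $(\xi(k),\mu(k),\nu(k),\xi(k+1))\in\delta$ for all $k\in\mathbb N_0$. $Q$ is live and reachable if every $x\in X_0$ is $\xi(0)$ for some $(\mu,\nu,\xi)\in\mathcal B_f(Q)$ and every $x\in X$ is $\xi(k)$ for some such trajectory and some $k$. Standing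 assumptions: $Q=(X,U,Y,\delta,X_0)$ is live and reachable and satisfies $(x,u,y,x')\in\delta\iff(x'\in F_\delta(x,u)\wedge y\in H_\delta(x))$ for all $x,x'\in X,u\in U,y\in Y$; the external signal space $W$ is finite and either $W=U\times Y$ or $W=Y$ (here $W=Y$). Behaviors: for a state machine $Q'$ with input set $U$ and output set $Y$, $\mathcal B(Q')$ is the set of $w:\mathbb Z\to Y\cup\{\diamond\}$ such that for some $(\mu,\nu,\xi)\in\mathcal B_f(Q')$, $w(k)=\diamond$ for $k<0$ and $w(k)=\nu(k)$ for $k\ge0$. $\mathcal B_S(Q)$ is the set of pairs $(w,\xi)$ of maps on $\mathbb Z$ with $w(k)=\xi(k)=\diamond$ for $k<0$ and $(w(k),\xi(k))=(\nu(k),\xi'(k))$ for $k\ge0$, for some $(\mu,\nu,\xi')\in\mathcal B_f(Q)$. For a set $\mathcal B$ of maps on $\mathbb Z$, $\Pi_l(\mathcal B)=\bigcup_{k\in\mathbb N_0}\mathcal B|_{[k-l+1,k]}$. SAlCA: for $l\in\mathbb N_0$, $\hat{\mathcal B}^l$ is the set of $w:\mathbb Z\to W\cup\{\diamond\}$ with $w(k)=\diamond$ for $k<0$, $w(k)\in W$ for $k\ge0$, $w|_{[-l,0]}\in\mathcal B(Q)|_{[-l,0]}$ and $w|_{[k-l,k]}\in\Pi_{l+1}(\mathcal B(Q))$ for all $k\in\mathbb N_0$. Corresponding strings: for integers $a,b$ and $x\in X$, $E^{[a,b]}(x)=\{\zeta:\exists(w,\xi)\in\mathcal B_S(Q),k\in\mathbb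 N_0:\ \xi(k)=x,\ \zeta=w|_{[k+a,k+b]}\}$; $I^l_l=[0,l-1]$. Quotient state machine (for $W=Y$): $\hat Q^{l\triangledown}=(\hat X^{l\triangledown},U,Y,\hat\delta^{l\triangledown},\hat X^{l\triangledown}_0)$ with $\hat X^{l\triangledown}=\{E^{I^l_l}(x):x\in X\}$ (a set of subsets of $Y^l$), $\hat X^{l\triangledown}_0=\{E^{I^l_l}(x):x\in X_0\}$, and $(\hat x,u,y,\hat x')\in\hat\delta^{l\triangledown}$ iff there exist $x,x'\in X$ with $\hat x=E^{I^l_l}(x)$, $\hat x'=E^{I^l_l}(x')$ and $(x,u,y,x')\in\delta$. Domino consistency (for $W=Y$): $Q$ is domino consistent if for all $\zeta\in\Pi_{l+1}(\mathcal B(Q))$ and all $\hat y\in\hat X^{l\triangledown}$ with $\zeta|_{[0,l-1]}\in\hat y$ there exists $x\in X$ with $E^{I^l_l}(x)=\hat y$ and $\zeta\in E^{[0,l]}(x)$. *)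

From Stdlib Require Import ZArith List.
Import ListNotations.
Open Scope Z_scope.

(* The symbol diamond is modelled by [None]; a value y is [Some y].
   A signal is a map  Z -> option Y ; a string is a list (option Y). *)

(* w|_[t1,t2] : string of length t2-t1+1 (empty if t2 < t1). *)
Definition restr {A : Type} (w : Z -> A) (t1 t2 : Z) : list A :=
  map (fun i => w (t1 + Z.of_nat i)) (seq 0 (Z.to_nat (t2 - t1 + 1))).

Section SM.
Context {X U Y : Type}.

Definition Hd (delta : X -> U -> Y -> X -> Prop) (x : X) (y : Y) : Prop :=
  exists u x', delta x u y x'.
Definition Fd (delta : X -> U -> Y -> X -> Prop) (x : X) (u : U) (x' : X) : Prop :=
  exists y, Hd delta x y /\ delta x u y x'.

Definition full_behavior (X0 : X -> Prop) (delta : X -> U -> Y -> X -> Prop)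
  (mu : nat -> U) (nu : nat -> Y) (xi : nat -> X) : Prop :=
  X0 (xi O) /\ forall k : nat, delta (xi k) (mu k) (nu k) (xi (S k)).

Definition live_reachable (X0 : X -> Prop) (delta : X -> U -> Y -> X -> Prop) : Prop :=
  (forall x, X0 x -> exists mu nu xi, full_behavior X0 delta mu nu xi /\ xi O = x) /\
  (forall x, exists mu nu xi k, full_behavior X0 delta mu nu xi /\ xi k = x).

Definition standing_delta (delta : X -> U -> Y -> X -> Prop) : Prop :=
  forall x u y x', delta x u y x' <-> (Fd delta x u x' /\ Hd delta x y).

Definition behavior (X0 : X -> Prop) (delta : X -> U -> Y -> X -> Prop)
  (w : Z -> option Y) : Prop :=
  exists mu nu xi, full_behavior X0 delta mu nu xi /\
    forall k : Z, (k < 0 -> w k = None) /\ (0 <= k -> w k = Some (nu (Z.to_nat k))).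

Definition behavior_S (X0 : X -> Prop) (delta : X -> U -> Y -> X -> Prop)
  (w : Z -> option Y) (xs : Z -> option X) : Prop :=
  exists mu nu xi, full_behavior X0 delta mu nu xi /\
    forall k : Z, (k < 0 -> w k = None /\ xs k = None) /\
                  (0 <= k -> w k = Some (nu (Z.to_nat k)) /\ xs k = Some (xi (Z.to_nat k))).

End SM.

Definition Pi {Y : Type} (l : nat) (B : (Z -> option Y) -> Prop)
  (zeta : list (option Y)) : Prop :=
  exists (w : Z -> option Y) (k : nat), B w /\
    zeta = restr w (Z.of_nat k - Z.of_nat l + 1) (Z.of_nat k).

Definition SAlCA {X U Y : Type} (X0 : X -> Prop) (delta : X -> U -> Y -> X -> Prop)
  (l : nat) (w : Z -> option Y) : Prop :=
  (forall k, k < 0 -> w k = None) /\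
  (forall k, 0 <= k -> exists y, w k = Some y) /\
  (exists w', behavior X0 delta w' /\
     restr w (- Z.of_nat l) 0 = restr w' (- Z.of_nat l) 0) /\
  (forall k : nat, Pi (S l) (behavior X0 delta)
                     (restr w (Z.of_nat k - Z.of_nat l) (Z.of_nat k))).

Definition Eab {X U Y : Type} (X0 : X -> Prop) (delta : X -> U -> Y -> X -> Prop)
  (a b : Z) (x : X) (zeta : list (option Y)) : Prop :=
  exists (w : Z -> option Y) (xs : Z -> option X) (k : nat),
    behavior_S X0 delta w xs /\ xs (Z.of_nat k) = Some x /\
    zeta = restr w (Z.of_nat k + a) (Z.of_nat k + b).

Definition EI {X U Y : Type} (X0 : X -> Prop) (delta : X -> U -> Y -> X -> Prop)
  (l : nat) (x : X) : list (option Y) -> Prop :=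
  Eab X0 delta 0 (Z.of_nat l - 1) x.

(* Quotient state machine \hat Q^{l triangledown}: states are sets of strings. *)
Definition qX {X U Y : Type} (X0 : X -> Prop) (delta : X -> U -> Y -> X -> Prop)
  (l : nat) (S : list (option Y) -> Prop) : Prop :=
  exists x, S = EI X0 delta l x.
Definition qX0 {X U Y : Type} (X0 : X -> Prop) (delta : X -> U -> Y -> X -> Prop)
  (l : nat) (S : list (option Y) -> Prop) : Prop :=
  exists x, X0 x /\ S = EI X0 delta l x.
Definition qdelta {X U Y : Type} (X0 : X -> Prop) (delta : X -> U -> Y -> X -> Prop)
  (l : nat) (S : list (option Y) -> Prop) (u : U) (y : Y)
  (S' : list (option Y) -> Prop) : Prop :=
  exists x x', S = EI X0 delta l x /\ S' = EI X0 delta l x' /\ delta x u y x'.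

(* Domino consistency; zeta|_[0,l-1] of a string zeta is [firstn l zeta]. *)
Definition domino_consistent {X U Y : Type} (X0 : X -> Prop)
  (delta : X -> U -> Y -> X -> Prop) (l : nat) : Prop :=
  forall zeta, Pi (S l) (behavior X0 delta) zeta ->
  forall S, qX X0 delta l S -> S (firstn l zeta) ->
  exists x, EI X0 delta l x = S /\ Eab X0 delta 0 (Z.of_nat l) x zeta.

(* A state of the quotient machine is the set E(x) of the length-l output strings
   that can follow some state x of Q; it determines all possible futures of x of
   length at most l.  Along a run of the quotient machine one can therefore lift one
   transition at a time: the next m <= l outputs from a quotient state E(x) are a
   possible future of x.  Hence the first l outputs are emitted from an initial state
   of Q and every window of length l+1 is a window of a behaviour of Q, which is
   what the SAlCA demands.  Conversely, domino consistency says exactly that a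
   quotient state compatible with the next l outputs can be advanced along the next
   output to a quotient state compatible with the following l outputs; dependent
   choice turns this into a run of the quotient machine for every SAlCA signal. *)
From Stdlib Require Import ZArith List Lia Classical IndefiniteDescription
  FunctionalExtensionality.
Import ListNotations.
Open Scope Z_scope.

Lemma dependent_choice {A : Type} (P : nat -> A -> Prop) (R : nat -> A -> A -> Prop) a0 :
  P 0%nat a0 -> (forall n a, P n a -> exists b, R n a b /\ P (S n) b) ->
  exists f : nat -> A, f 0%nat = a0 /\ forall n, R n (f n) (f (S n)).
Proof.
  intros H0 Hstep.
  destruct (functional_choice (fun (p : nat * A) (b : A) =>
    P (fst p) (snd p) -> R (fst p) (snd p) b /\ P (S (fst p)) b)) as [g Hg].
  { intros [n a]; destruct (classic (P n a)) as [Ha | Ha].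
    - destruct (Hstep n a Ha) as [b Hb]; exists b; auto.
    - exists a; contradiction. }
  set (f := fix f n := match n with O => a0 | S n' => g (n', f n') end).
  assert (Pf : forall n, P n (f n)).
  { induction n; [exact H0 | exact (proj2 (Hg (n, f n) IHn))]. }
  exists f; split; [reflexivity |].
  intro n; exact (proj1 (Hg (n, f n) (Pf n))).
Qed.

Definition signal_of {Y : Type} (nu : nat -> Y) : Z -> option Y :=
  fun z => if z <? 0 then None else Some (nu (Z.to_nat z)).

Definition window {Y : Type} (nu : nat -> Y) (t m : nat) : list (option Y) :=
  map (fun i => Some (nu (t + i)%nat)) (seq 0 m).

Section Signals.
Context {Y : Type}.
Implicit Types (nu : nat -> Y) (w : Z -> option Y).

Lemma signal_of_nat nu n : signal_of nu (Z.of_nat n) = Some (nu n).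
Proof.
  unfold signal_of; rewrite (proj2 (Z.ltb_ge _ 0)) by lia; now rewrite Nat2Z.id.
Qed.

Lemma signal_of_neg nu z : z < 0 -> signal_of nu z = None.
Proof. intro Hz; unfold signal_of; now rewrite (proj2 (Z.ltb_lt _ 0) Hz). Qed.

Lemma signal_of_spec nu w :
  (forall k, (k < 0 -> w k = None) /\ (0 <= k -> w k = Some (nu (Z.to_nat k)))) <->
  w = signal_of nu.
Proof.
  split.
  - intro Hw; apply functional_extensionality; intro k.
    destruct (Z.ltb_spec k 0).
    + rewrite signal_of_neg by lia; apply Hw; lia.
    + unfold signal_of; rewrite (proj2 (Z.ltb_ge k 0)) by lia; apply Hw; lia.
  - intros -> k; split; intro Hk.
    + now apply signal_of_neg.
    + now rewrite <- (Z2Nat.id k) at 1 by lia; rewrite signal_of_nat.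
Qed.

Lemma signal_of_total w :
  (forall k, k < 0 -> w k = None) -> (forall k, 0 <= k -> exists y, w k = Some y) ->
  exists nu, w = signal_of nu.
Proof.
  intros Hneg Hpos.
  destruct (functional_choice (fun (n : nat) (y : Y) => w (Z.of_nat n) = Some y)) as [nu Hnu].
  { intro n; apply Hpos; lia. }
  exists nu; apply signal_of_spec; intro k; split; intro Hk.
  - now apply Hneg.
  - now rewrite <- (Z2Nat.id k) at 1 by lia.
Qed.

Lemma window_S nu t m : window nu t (S m) = Some (nu t) :: window nu (S t) m.
Proof.
  unfold window; simpl; rewrite Nat.add_0_r, <- seq_shift, map_map.
  f_equal; apply map_ext; intro i; now rewrite Nat.add_succ_r.
Qed.

Lemma firstn_window nu t m n : (m <= n)%nat -> firstn m (window nu t n) = window nu t m.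
Proof.
  revert t n; induction m as [| m IH]; intros t [| n] Hmn; try (reflexivity || lia).
  rewrite !window_S; simpl; now rewrite IH by lia.
Qed.

Lemma window_inj nu nu' t t' m : window nu t m = window nu' t' m ->
  forall i, (i < m)%nat -> nu (t + i)%nat = nu' (t' + i)%nat.
Proof.
  revert t t'; induction m as [| m IH]; intros t t' E i Hi; [lia |].
  rewrite !window_S in E; injection E as E0 E1.
  destruct i as [| i]; [now rewrite !Nat.add_0_r |].
  rewrite <- !Nat.add_succ_comm; apply IH; auto; lia.
Qed.

Lemma restr_cons {A : Type} (v : Z -> A) a b :
  a <= b -> restr v a b = v a :: restr v (a + 1) b.
Proof.
  intro Hab; unfold restr.
  replace (Z.to_nat (b - a + 1)) with (S (Z.to_nat (b - (a + 1) + 1))) by lia.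
  simpl; rewrite Z.add_0_r, <- seq_shift, map_map; f_equal.
  apply map_ext; intro i; f_equal; lia.
Qed.

Lemma restr_ext {A : Type} (v v' : Z -> A) a b :
  (forall z, a <= z <= b -> v z = v' z) -> restr v a b = restr v' a b.
Proof.
  intro E; unfold restr; apply map_ext_in; intros i Hi.
  apply in_seq in Hi; apply E; lia.
Qed.

Lemma restr_signal_of nu t m :
  restr (signal_of nu) (Z.of_nat t) (Z.of_nat t + Z.of_nat m - 1) = window nu t m.
Proof.
  unfold restr, window.
  replace (Z.to_nat (Z.of_nat t + Z.of_nat m - 1 - Z.of_nat t + 1)) with m by lia.
  apply map_ext; intro i; now rewrite <- Nat2Z.inj_add, signal_of_nat.
Qed.

Lemma restr_signal_of_window nu k l : (l <= k)%nat ->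
  restr (signal_of nu) (Z.of_nat k - Z.of_nat l) (Z.of_nat k) = window nu (k - l) (S l).
Proof. intro Hlk; rewrite <- restr_signal_of; f_equal; lia. Qed.

End Signals.

Section Futures.
Context {X U Y : Type} (X0 : X -> Prop) (delta : X -> U -> Y -> X -> Prop).

Lemma behavior_signal_of w :
  behavior X0 delta w <->
  exists mu nu xi, full_behavior X0 delta mu nu xi /\ w = signal_of nu.
Proof.
  split; intros (mu & nu & xi & Hf & Hw); exists mu, nu, xi; split; auto;
    now apply signal_of_spec.
Qed.

Lemma behavior_S_signal_of w xs :
  behavior_S X0 delta w xs <->
  exists mu nu xi, full_behavior X0 delta mu nu xi /\ w = signal_of nu /\ xs = signal_of xi.
Proof.
  split.
  - intros (mu & nu & xi & Hf & Hw); exists mu, nu, xi; split; [exact Hf |].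
    split; apply signal_of_spec; intro k; split; intro Hk; apply Hw; auto.
  - intros (mu & nu & xi & Hf & -> & ->); exists mu, nu, xi; split; [exact Hf |].
    intro k; split; intro Hk.
    + now rewrite !signal_of_neg.
    + now rewrite <- (Z2Nat.id k), !signal_of_nat, Nat2Z.id by lia.
Qed.

Lemma Pi_restr_behavior l k w :
  behavior X0 delta w -> Pi (S l) (behavior X0 delta)
    (restr w (Z.of_nat k - Z.of_nat l) (Z.of_nat k)).
Proof.
  intro Hw; exists w, k; split; [exact Hw |].
  now replace (Z.of_nat k - Z.of_nat (S l) + 1) with (Z.of_nat k - Z.of_nat l) by lia.
Qed.

Definition future (x : X) (m : nat) (s : list (option Y)) : Prop :=
  exists mu nu xi t, full_behavior X0 delta mu nu xi /\ xi t = x /\ s = window nu t m.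

Lemma Eab_future x m s : Eab X0 delta 0 (Z.of_nat m - 1) x s <-> future x m s.
Proof.
  split.
  - intros (w & xs & k & HS & Hx & ->).
    apply behavior_S_signal_of in HS as (mu & nu & xi & Hf & -> & ->).
    rewrite signal_of_nat in Hx; injection Hx as Hx.
    exists mu, nu, xi, k; split; [exact Hf | split; [exact Hx |]].
    rewrite Z.add_0_r, Z.add_sub_assoc; apply restr_signal_of.
  - intros (mu & nu & xi & t & Hf & Hx & ->).
    exists (signal_of nu), (signal_of xi), t; repeat split.
    + apply behavior_S_signal_of; now exists mu, nu, xi.
    + now rewrite signal_of_nat, Hx.
    + rewrite Z.add_0_r, Z.add_sub_assoc; symmetry; apply restr_signal_of.
Qed.

Lemma EI_future l x s : EI X0 delta l x s <-> future x l s.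
Proof. apply Eab_future. Qed.

Lemma future_Pi x m s : future x (S m) s -> Pi (S m) (behavior X0 delta) s.
Proof.
  intros (mu & nu & xi & t & Hf & _ & ->).
  rewrite <- restr_signal_of.
  replace (Z.of_nat t) with (Z.of_nat (t + m) - Z.of_nat m) at 1 by lia.
  replace (Z.of_nat t + Z.of_nat (S m) - 1) with (Z.of_nat (t + m)) by lia.
  apply Pi_restr_behavior, behavior_signal_of; now exists mu, nu, xi.
Qed.

Lemma future_firstn x n m s : (m <= n)%nat -> future x n s -> future x m (firstn m s).
Proof.
  intros Hm (mu & nu & xi & t & Hf & Hx & ->); exists mu, nu, xi, t.
  now rewrite firstn_window.
Qed.

Lemma future_extend x n m s : (m <= n)%nat -> future x m s ->
  exists s', future x n s' /\ firstn m s' = s.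
Proof.
  intros Hm (mu & nu & xi & t & Hf & Hx & ->); exists (window nu t n); split.
  - now exists mu, nu, xi, t.
  - now apply firstn_window.
Qed.

Lemma future_EI_eq l x x' m s : EI X0 delta l x = EI X0 delta l x' -> (m <= l)%nat ->
  future x m s -> future x' m s.
Proof.
  intros E Hm F.
  destruct (future_extend x l m s Hm F) as (s' & F' & <-).
  apply (future_firstn x' l); [exact Hm |].
  apply EI_future; rewrite <- E; now apply EI_future.
Qed.

Lemma future_cons_inv x m y s : future x (S m) (Some y :: s) ->
  exists u x', delta x u y x' /\ future x' m s.
Proof.
  intros (mu & nu & xi & t & Hf & Hx & Hs).
  rewrite window_S in Hs; injection Hs as -> ->.
  exists (mu t), (xi (S t)); split.
  - rewrite <- Hx; apply Hf.
  - now exists mu, nu, xi, (S t).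
Qed.

Lemma future_from_initial x m s : X0 x -> future x m s ->
  exists mu nu xi, full_behavior X0 delta mu nu xi /\ s = window nu 0 m.
Proof.
  intros H0 (mu & nu & xi & t & [_ Hst] & Hx & ->).
  exists (fun i => mu (t + i)%nat), (fun i => nu (t + i)%nat), (fun i => xi (t + i)%nat).
  repeat split.
  - now rewrite Nat.add_0_r, Hx.
  - intro k; rewrite Nat.add_succ_r; apply Hst.
Qed.

(* A string starting with one diamond is a window of a behaviour only at time 0. *)
Lemma Pi_initial_window (nu : nat -> Y) m : (1 <= m)%nat ->
  Pi (S m) (behavior X0 delta) (None :: window nu 0 m) ->
  exists x, X0 x /\ future x m (window nu 0 m).
Proof.
  intros Hm (w & k & Hw & E).
  apply behavior_signal_of in Hw as (mu & nu' & xi & Hf & ->).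
  assert (Hk : k = (m - 1)%nat).
  { destruct (Nat.lt_ge_cases k (m - 1)) as [Hlt | Hge].
    - rewrite restr_cons, (restr_cons _ (_ + 1)), !signal_of_neg in E by lia.
      destruct m as [| [| m]]; [lia | lia |].
      rewrite window_S in E; discriminate.
    - destruct (Nat.eq_dec k (m - 1)) as [Heq | Hne]; [exact Heq |].
      rewrite restr_cons in E by lia.
      replace (Z.of_nat k - Z.of_nat (S m) + 1) with (Z.of_nat (k - m)) in E by lia.
      rewrite signal_of_nat in E; discriminate. }
  subst k; rewrite restr_cons in E by lia.
  replace (Z.of_nat (m - 1) - Z.of_nat (S m) + 1 + 1) with (Z.of_nat 0) in E by lia.
  replace (Z.of_nat (m - 1)) with (Z.of_nat 0 + Z.of_nat m - 1) in E by lia.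
  rewrite restr_signal_of in E; injection E as E.
  exists (xi 0%nat); split; [apply Hf |].
  exists mu, nu', xi, 0%nat; auto.
Qed.

Section LiveReachable.
Hypothesis Hlr : live_reachable X0 delta.

Lemma future_nil x : future x 0 [].
Proof.
  destruct (proj2 Hlr x) as (mu & nu & xi & k & Hf & Hx).
  now exists mu, nu, xi, k.
Qed.

Lemma full_behavior_splice mu1 nu1 xi1 mu2 nu2 xi2 t :
  full_behavior X0 delta mu1 nu1 xi1 ->
  (forall k, delta (xi2 k) (mu2 k) (nu2 k) (xi2 (S k))) -> xi1 t = xi2 0%nat ->
  exists mu nu xi, full_behavior X0 delta mu nu xi /\
    (forall i, nu (t + i)%nat = nu2 i) /\ (forall i, xi (t + i)%nat = xi2 i).
Proof.
  intros [H0 H1] H2 E.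
  set (splice := fun {A} (f g : nat -> A) i => if Nat.ltb i t then f i else g (i - t)%nat).
  exists (splice _ mu1 mu2), (splice _ nu1 nu2), (splice _ xi1 xi2); unfold splice.
  assert (Hright : forall A (f g : nat -> A) i,
             (if Nat.ltb (t + i) t then f (t + i)%nat else g (t + i - t)%nat) = g i).
  { intros A f g i; destruct (Nat.ltb_spec (t + i) t); [lia |]; f_equal; lia. }
  repeat split; [| intro k | intro i; apply Hright | intro i; apply Hright].
  - destruct (Nat.ltb_spec 0 t); [exact H0 |].
    replace t with 0%nat in E by lia; simpl; rewrite <- E; exact H0.
  - destruct (Nat.ltb_spec k t), (Nat.ltb_spec (S k) t); try lia.
    + apply H1.
    + replace (S k - t)%nat with 0%nat by lia; rewrite <- E.
      replace t with (S k) by lia; apply H1.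
    + replace (S k - t)%nat with (S (k - t)) by lia; apply H2.
Qed.

(* Reachability of x lets us prepend the transition to a future of x'. *)
Lemma future_step x u y x' m s : delta x u y x' -> future x' m s ->
  future x (S m) (Some y :: s).
Proof.
  intros Hd (mu2 & nu2 & xi2 & t2 & Hf2 & Hx2 & ->).
  destruct (proj2 Hlr x) as (mu1 & nu1 & xi1 & k & Hf1 & Hx1).
  destruct (full_behavior_splice mu1 nu1 xi1
     (fun i => match i with O => u | S j => mu2 (t2 + j)%nat end)
     (fun i => match i with O => y | S j => nu2 (t2 + j)%nat end)
     (fun i => match i with O => x | S j => xi2 (t2 + j)%nat end) k Hf1)
    as (mu & nu & xi & Hf & Hnu & Hxi); [| exact Hx1 |].
  - intros [| j].
    + rewrite Nat.add_0_r, Hx2; exact Hd.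
    + rewrite Nat.add_succ_r; apply Hf2.
  - exists mu, nu, xi, k; split; [exact Hf | split; [now rewrite <- (Nat.add_0_r k), Hxi |]].
    rewrite window_S, <- (Nat.add_0_r k) at 1; rewrite Hnu; f_equal.
    unfold window; apply map_ext; intro i.
    now rewrite Nat.add_succ_comm, Hnu.
Qed.

End LiveReachable.
End Futures.

Section Quotient.
Context {X U Y : Type} (X0 : X -> Prop) (delta : X -> U -> Y -> X -> Prop) (l : nat).
Hypothesis Hl : (1 <= l)%nat.

Section Runs.
Hypothesis Hlr : live_reachable X0 delta.
Variables (mu : nat -> U) (nu : nat -> Y) (f : nat -> list (option Y) -> Prop).
Hypothesis Hrun : forall k, qdelta X0 delta l (f k) (mu k) (nu k) (f (S k)).

Lemma quotient_run_future m j x : (m <= l)%nat -> f j = EI X0 delta l x ->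
  future X0 delta x m (window nu j m).
Proof.
  revert j x; induction m as [| m IH]; intros j x Hm Ex; [now apply future_nil |].
  destruct (Hrun j) as (xj & xj' & E & E' & Hd).
  apply (future_EI_eq X0 delta l xj); [congruence | exact Hm |].
  rewrite window_S; apply (future_step X0 delta Hlr _ _ _ xj' _ _ Hd).
  apply IH; [lia | exact E'].
Qed.

Lemma quotient_run_window j : exists x, future X0 delta x (S l) (window nu j (S l)).
Proof.
  destruct (Hrun j) as (xj & xj' & _ & E' & Hd); exists xj.
  rewrite window_S; apply (future_step X0 delta Hlr _ _ _ xj' _ _ Hd).
  now apply quotient_run_future.
Qed.

End Runs.

Lemma quotient_behavior_SAlCA w : live_reachable X0 delta ->
  behavior (qX0 X0 delta l) (qdelta X0 delta l) w -> SAlCA X0 delta l w.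
Proof.
  intros Hlr Hw; apply behavior_signal_of in Hw as (mu & nu & f & [Hf0 Hrun] & ->).
  destruct Hf0 as (x0 & Hx0 & E0).
  destruct (future_from_initial X0 delta x0 l (window nu 0 l) Hx0
              (quotient_run_future Hlr mu nu f Hrun l 0 x0 (le_n l) E0))
    as (mu0 & nu0 & xi0 & Hf & Hwin).
  assert (Hb0 : behavior X0 delta (signal_of nu0))
    by (apply behavior_signal_of; now exists mu0, nu0, xi0).
  assert (Hagree : forall z, z < Z.of_nat l -> signal_of nu z = signal_of nu0 z).
  { intros z Hz; destruct (Z.ltb_spec z 0); [now rewrite !signal_of_neg |].
    rewrite <- (Z2Nat.id z), !signal_of_nat by lia; f_equal.
    apply (window_inj nu nu0 0 0 l Hwin (Z.to_nat z)); lia. }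
  repeat split.
  - now apply signal_of_neg.
  - intros k Hk; rewrite <- (Z2Nat.id k), signal_of_nat by lia; now eexists.
  - exists (signal_of nu0); split; [exact Hb0 |].
    apply restr_ext; intros z Hz; apply Hagree; lia.
  - intro k; destruct (Nat.lt_ge_cases k l) as [Hk | Hk].
    + rewrite (restr_ext _ (signal_of nu0)) by (intros z Hz; apply Hagree; lia).
      now apply Pi_restr_behavior.
    + destruct (quotient_run_window Hlr mu nu f Hrun (k - l)) as [x Hx].
      rewrite restr_signal_of_window by exact Hk; exact (future_Pi _ _ _ _ _ Hx).
Qed.

Lemma domino_step (nu : nat -> Y) n q : domino_consistent X0 delta l ->
  Pi (S l) (behavior X0 delta) (window nu n (S l)) ->
  qX X0 delta l q -> q (window nu n l) ->
  exists u q', qdelta X0 delta l q u (nu n) q' /\ qX X0 delta l q' /\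
               q' (window nu (S n) l).
Proof.
  intros Hdom HPi Hq Hn.
  rewrite <- (firstn_window nu n l (S l)) in Hn by lia.
  destruct (Hdom _ HPi q Hq Hn) as (x & Ex & Hab).
  replace (Z.of_nat l) with (Z.of_nat (S l) - 1) in Hab by lia.
  apply Eab_future in Hab; rewrite window_S in Hab.
  destruct (future_cons_inv X0 delta _ _ _ _ Hab) as (u & x' & Hd & F').
  exists u, (EI X0 delta l x'); repeat split.
  - now exists x, x'.
  - now exists x'.
  - now apply EI_future.
Qed.

Lemma SAlCA_quotient_behavior w : domino_consistent X0 delta l ->
  SAlCA X0 delta l w -> behavior (qX0 X0 delta l) (qdelta X0 delta l) w.
Proof.
  intros Hdom (Hneg & Hpos & _ & Hwin).
  destruct (signal_of_total w Hneg Hpos) as [nu ->].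
  assert (HPi : forall n, Pi (S l) (behavior X0 delta) (window nu n (S l))).
  { intro n; specialize (Hwin (n + l)%nat).
    rewrite restr_signal_of_window, Nat.add_sub in Hwin by lia; exact Hwin. }
  assert (HPi0 : Pi (S l) (behavior X0 delta) (None :: window nu 0 l)).
  { specialize (Hwin (l - 1)%nat).
    rewrite restr_cons, signal_of_neg in Hwin by lia.
    replace (Z.of_nat (l - 1) - Z.of_nat l + 1) with (Z.of_nat 0) in Hwin by lia.
    replace (Z.of_nat (l - 1)) with (Z.of_nat 0 + Z.of_nat l - 1) in Hwin by lia.
    now rewrite restr_signal_of in Hwin. }
  destruct (Pi_initial_window X0 delta nu l Hl HPi0) as (x0 & Hx0 & F0).
  destruct (dependent_choice
    (fun n q => qX X0 delta l q /\ q (window nu n l))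
    (fun n q q' => exists u, qdelta X0 delta l q u (nu n) q')
    (EI X0 delta l x0)) as (f & Hf0 & Hf).
  - split; [now exists x0 | now apply EI_future].
  - intros n q [Hq Hn].
    destruct (domino_step nu n q Hdom (HPi n) Hq Hn) as (u & q' & Hd & Hq'); eauto.
  - destruct (functional_choice
      (fun (n : nat) (u : U) => qdelta X0 delta l (f n) u (nu n) (f (S n))) Hf) as [mu Hmu].
    apply behavior_signal_of; exists mu, nu, f; repeat split; auto.
    now exists x0; rewrite Hf0.
Qed.

End Quotient.

Theorem corollary10 (X U Y : Type) (X0 : X -> Prop)
  (delta : X -> U -> Y -> X -> Prop) (l : nat)
  (HYfin : exists ys : list Y, forall y : Y, In y ys)
  (Hlr : live_reachable X0 delta)
  (Hstd : standing_delta delta)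
  (Hl : (1 <= l)%nat)
  (Hdom : domino_consistent X0 delta l) :
  forall w : Z -> option Y,
    behavior (qX0 X0 delta l) (qdelta X0 delta l) w <-> SAlCA X0 delta l w.
Proof.
  intro w; split.
  - now apply quotient_behavior_SAlCA.
  - now apply SAlCA_quotient_behavior.
Qed.
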